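(* Let $v>0$ entrywise in $\mathbb{R}^{n\times m}$, $B\in\mathbb{R}^n_{>0}$, and let $\mathcal{B}$, $p(b)$, $\varphi$ be as in the QL-Shmyrev program with optimal value $\varphi^*$ and $p^*=p(b^* )$ for an optimal $(b^*,\delta^* )$. Let $b^0_{ij}=\delta^0_i=\frac{B_i}{m+1}$ for all $i,j$ and define mirror descent iterates $$(b^{t+1},\delta^{t+1})=\arg\min_{(b,\delta)\in\mathcal{B}}\ \langle\nabla\varphi(b^t),b-b^t\rangle+\sum_{i,j}b_{ij}\log\frac{b_{ij}}{b^t_{ij}}+\sum_i\delta_i\log\frac{\delta_i}{\delta^t_i}.$$ Then for all $t\ge1$, $D(p(b^t)\,\|\,p^* )\le\varphi(b^t)-\varphi^*\le\frac{\|B\|_1\log(m+1)}{t}$.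
   Context: QL-Shmyrev program: $\mathcal{B}=\{(b,\delta)\in\mathbb{R}^{n\times m}\times\mathbb{R}^n: b\ge0,\delta\ge0,\sum_jb_{ij}+\delta_i=B_i\ \forall i\}$, $p_j(b)=\sum_ib_{ij}$, $\varphi(b)=-\sum_{i,j}(1+\log v_{ij})b_{ij}+\sum_jp_j(b)\log p_j(b)$, minimized over $\mathcal{B}$; $\nabla\varphi(b)$ has entries $\log(p_j(b)/v_{ij})$. Generalized KL divergence for $p,q\in\mathbb{R}^d_+$: $D(p\|q)=\sum_ip_i\log\frac{p_i}{q_i}-\sum_ip_i+\sum_iq_i$, with $0\log0=0$. *)

From HB Require Import structures.
From mathcomp Require Import all_boot all_order all_algebra.
From mathcomp Require Import all_classical all_reals all_analysis.
Set Implicit Arguments. Unset Strict Implicit. Unset Printing Implicit Defensive.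
Import Order.TTheory GRing.Theory Num.Theory.
Local Open Scope ring_scope.

Section QLShmyrev.
Variable R : realType.

Definition xlogx (x : R) : R := if x == 0 then 0 else x * ln x.

Definition xlogxy (x y : R) : R := if x == 0 then 0 else x * ln (x / y).

Definition price (n m : nat) (b : 'M[R]_(n, m)) (j : 'I_m) : R :=
  \sum_(i < n) b i j.

Definition inB (n m : nat) (B : 'I_n -> R) (b : 'M[R]_(n, m)) (d : 'I_n -> R)
  : Prop :=
  [/\ forall i j, 0 <= b i j,
      forall i, 0 <= d i
    & forall i, \sum_(j < m) b i j + d i = B i].

Definition phi (n m : nat) (v : 'M[R]_(n, m)) (b : 'M[R]_(n, m)) : R :=
  - (\sum_(i < n) \sum_(j < m) (1 + ln (v i j)) * b i j)
  + \sum_(j < m) xlogx (price b j).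

Definition grad_phi (n m : nat) (v b : 'M[R]_(n, m)) : 'M[R]_(n, m) :=
  \matrix_(i < n, j < m) ln (price b j / v i j).

Definition KLdiv (k : nat) (p q : 'I_k -> R) : R :=
  \sum_(i < k) xlogxy (p i) (q i) - \sum_(i < k) p i + \sum_(i < k) q i.

Definition md_obj (n m : nat) (v : 'M[R]_(n, m)) (bt : 'M[R]_(n, m))
  (dt : 'I_n -> R) (b : 'M[R]_(n, m)) (d : 'I_n -> R) : R :=
  \sum_(i < n) \sum_(j < m) grad_phi v bt i j * (b i j - bt i j)
  + \sum_(i < n) \sum_(j < m) xlogxy (b i j) (bt i j)
  + \sum_(i < n) xlogxy (d i) (dt i).

End QLShmyrev.

(* Write kl x y = x log (x / y) - x + y for the scalar generalized KL term and
   KLB for the KL divergence on the feasible polytope \mathcal{B}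
   (entries of b and the slacks d together); bstar is an optimal point and
   pstar = p(bstar).  The proof has five parts.
   1. Scalar facts: kl >= 0, kl vanishes only on the diagonal,
      kl x y <= (x - y)^2 / y, and the log-sum inequality.
   2. phi is a Bregman divergence of prices plus a linear term:
      phi b' - phi b - <grad phi b, b' - b> = sum_j kl (p_j b') (p_j b);
      by the log-sum inequality phi is 1-smooth relative to KLB.
   3. The mirror step has the closed-form multiplicative update; the
      subproblem objective is a constant plus KLB(. || update), so the argmin
      is this interior update and the three-point identity holds.
   4. All prices at bstar are positive (moving mass towards a good of price
      zero would decrease phi like s log s), hence the first-order condition
      <grad phi bstar, b' - bstar> >= 0 holds, and with (2) this yields
      D(p(b) || pstar) <= phi b - phi bstar.
   5. From (2) and (3): phi decreases along the iterates and
      phi b_{t+1} - phi bstar <= KLB(bstar || b_t) - KLB(bstar || b_{t+1});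
      telescoping and KLB(bstar || b_0) <= ||B||_1 log (m+1) give the rate. *)
Set Warnings "-notation-overridden,-ambiguous-paths,-notation-incompatible-prefix".
From HB Require Import structures.
From mathcomp Require Import all_boot all_order all_algebra.
From mathcomp Require Import all_classical all_reals all_analysis.
From mathcomp Require Import ring lra.
Set Implicit Arguments. Unset Strict Implicit. Unset Printing Implicit Defensive.
Import Order.TTheory GRing.Theory Num.Theory.
Local Open Scope ring_scope.

Section ScalarFacts.
Variable R : realType.
Implicit Types x y z s h c K L P Q X Y : R.

Definition kl x y : R := xlogxy x y - x + y.

Lemma xlogxy0 y : xlogxy 0 y = 0.
Proof. by rewrite /xlogxy eqxx. Qed.

Lemma xlogxyE x y : 0 < x -> xlogxy x y = x * ln (x / y).
Proof. by move=> x_gt0; rewrite /xlogxy gt_eqF. Qed.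

Lemma xlogx0 : xlogx (0 : R) = 0.
Proof. by rewrite /xlogx eqxx. Qed.

Lemma xlogxE x : 0 < x -> xlogx x = x * ln x.
Proof. by move=> x_gt0; rewrite /xlogx gt_eqF. Qed.

Lemma xlogxy_self x : xlogxy x x = 0.
Proof. by rewrite /xlogxy; case: eqP => // /eqP x0; rewrite divff // ln1 mulr0. Qed.

Lemma ln_divr x y : 0 < x -> 0 < y -> ln (x / y) = ln x - ln y.
Proof. by move=> x_gt0 y_gt0; rewrite ln_div ?posrE. Qed.

Lemma ln_mulr x y : 0 < x -> 0 < y -> ln (x * y) = ln x + ln y.
Proof. by move=> x_gt0 y_gt0; rewrite lnM ?posrE. Qed.

Lemma ln_le_subr1 z : 0 < z -> ln z <= z - 1.
Proof. by move=> z_gt0; have := expR_ge1Dx (ln z); rewrite lnK ?posrE //; lra. Qed.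

Lemma ln_lt_subr1 z : 0 < z -> z != 1 -> ln z < z - 1.
Proof.
move=> z_gt0 z_neq1; have := @expR_gt1Dx R (ln z); rewrite lnK ?posrE //.
by rewrite ln_eq0 // z_neq1 => /(_ isT); lra.
Qed.

Lemma kl_ge0 x y : 0 <= x -> 0 < y -> 0 <= kl x y.
Proof.
rewrite /kl le_eqVlt => /orP[/eqP <-|x_gt0] y_gt0; first by rewrite xlogxy0; lra.
have := ln_le_subr1 (divr_gt0 y_gt0 x_gt0).
rewrite xlogxyE // !ln_divr //.
have : x * (y / x) = y by field; rewrite gt_eqF.
nra.
Qed.

(* kl x y = 0 forces x = y: the strict tangent bound applies off the diagonal. *)
Lemma kl_eq0 x y : 0 <= x -> 0 < y -> kl x y = 0 -> x = y.
Proof.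
rewrite /kl le_eqVlt => /orP[/eqP <-|x_gt0] y_gt0; first by rewrite xlogxy0; lra.
have [yx1|yx_neq1] := eqVneq (y / x) 1.
  by move=> _; rewrite -[y](@divfK _ x) ?gt_eqF // yx1 mul1r.
have := ln_lt_subr1 (divr_gt0 y_gt0 x_gt0) yx_neq1.
rewrite xlogxyE // !ln_divr //.
have : x * (y / x) = y by field; rewrite gt_eqF.
nra.
Qed.

Lemma kl_le_chi2 x y : 0 <= x -> 0 < y -> kl x y <= (x - y) ^+ 2 / y.
Proof.
rewrite /kl le_eqVlt => /orP[/eqP <-|x_gt0] y_gt0.
  have -> : (0 - y) ^+ 2 / y = y by field; rewrite gt_eqF.
  by rewrite xlogxy0; lra.
have := ln_le_subr1 (divr_gt0 x_gt0 y_gt0).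
have -> : (x - y) ^+ 2 / y = x * (x / y) - x - x + y by field; rewrite gt_eqF.
rewrite xlogxyE //; nra.
Qed.

Lemma xlogx_bregman x y : 0 <= x -> 0 < y ->
  xlogx x - xlogx y - (ln y + 1) * (x - y) = kl x y.
Proof.
rewrite /kl le_eqVlt => /orP[/eqP <-|x_gt0] y_gt0.
  by rewrite xlogx0 xlogxy0 xlogxE //; ring.
by rewrite !xlogxE // xlogxyE // ln_divr //; ring.
Qed.

Lemma xlogxy_shift x y z : 0 <= x -> 0 < y -> 0 < z ->
  xlogxy x y = xlogxy x z + x * ln (z / y).
Proof.
rewrite le_eqVlt => /orP[/eqP <-|x_gt0] y_gt0 z_gt0.
  by rewrite !xlogxy0 mul0r addr0.
by rewrite !xlogxyE // !ln_divr //; ring.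
Qed.

(* One summand of the log-sum inequality, from ln z <= z - 1. *)
Lemma logsum_term x y X Y : 0 <= x -> 0 < y -> 0 < X -> 0 < Y ->
  x - y * X / Y <= xlogxy x y - x * ln (X / Y).
Proof.
rewrite le_eqVlt => /orP[/eqP <-|x_gt0] y_gt0 X_gt0 Y_gt0.
  rewrite xlogxy0 mul0r subr0 sub0r oppr_le0.
  by apply/ltW/divr_gt0 => //; apply: mulr_gt0.
have := ln_le_subr1 (divr_gt0 (mulr_gt0 y_gt0 X_gt0) (mulr_gt0 x_gt0 Y_gt0)).
rewrite xlogxyE // [ln (x / y)]ln_divr // [ln (X / Y)]ln_divr //.
rewrite [ln (_ / (x * Y))]ln_divr ?mulr_gt0 // [ln (y * X)]ln_mulr //.
rewrite [ln (x * Y)]ln_mulr //.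
have : x * (y * X / (x * Y)) = y * X / Y by field; rewrite !gt_eqF.
nra.
Qed.

Lemma logsum k (x y : 'I_k -> R) : (forall i, 0 <= x i) -> (forall i, 0 < y i) ->
  0 < \sum_(i < k) y i ->
  xlogxy (\sum_(i < k) x i) (\sum_(i < k) y i) <= \sum_(i < k) xlogxy (x i) (y i).
Proof.
move=> x_ge0 y_gt0 Y_gt0.
have : 0 <= \sum_(i < k) x i by apply: sumr_ge0.
rewrite le_eqVlt => /orP[/eqP X0|X_gt0].
  rewrite -X0 xlogxy0 big1 // => i _.
  by rewrite (psumr_eq0P (fun i _ => x_ge0 i) (esym X0)) // xlogxy0.
set X := \sum_(i < k) x i; set Y := \sum_(i < k) y i.
have : \sum_(i < k) (x i - y i * X / Y) <=
       \sum_(i < k) (xlogxy (x i) (y i) - x i * ln (X / Y)).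
  by apply: ler_sum => i _; apply: logsum_term => //; apply: ltW.
rewrite !sumrB -!mulr_suml xlogxyE //.
have -> : Y * X / Y = X by field; rewrite gt_eqF.
by rewrite subrr subr_ge0.
Qed.

Definition step_coef x h : R :=
  if x == 0 then 0 else (ln x + 1) * h + h ^+ 2 / x.

Lemma step_coef0 h : step_coef 0 h = 0.
Proof. by rewrite /step_coef eqxx. Qed.

Lemma xlogx_step_le x h s : 0 <= x -> 0 <= s <= 1 -> 0 <= x + s * h ->
  (x = 0 -> h = 0) -> xlogx (x + s * h) - xlogx x <= s * step_coef x h.
Proof.
rewrite /step_coef le_eqVlt => /orP[/eqP x0|x_gt0] /andP[s_ge0 s_le1] xsh_ge0 h0.
  by rewrite -x0 eqxx (h0 (esym x0)) mulr0 addr0 subrr.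
rewrite gt_eqF //.
have := kl_le_chi2 xsh_ge0 x_gt0; rewrite -xlogx_bregman //.
have -> : (x + s * h - x) ^+ 2 / x = s ^+ 2 * (h ^+ 2 / x) by field; rewrite gt_eqF.
have : s ^+ 2 * (h ^+ 2 / x) <= s * (h ^+ 2 / x).
  by rewrite expr2 -mulrA ler_wpM2l // ler_piMl // divr_ge0 ?sqr_ge0 // ltW.
lra.
Qed.

Lemma xlogx_beats_linear K P : 0 < P ->
  exists s, 0 < s <= 1 /\ s * K + xlogx (s * P) < 0.
Proof.
move=> P_gt0; set E := expR (- ((`|K| + 1) / P)); set s := E / (P + E).
have E_gt0 : 0 < E by apply: expR_gt0.
have s_gt0 : 0 < s by apply: divr_gt0 => //; lra.
exists s; split; first by rewrite s_gt0 /= ler_pdivrMr; lra.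
have sP_gt0 : 0 < s * P by apply: mulr_gt0.
have sP_le : s * P <= E.
  rewrite /s mulrAC ler_pdivrMr; last lra.
  by rewrite mulrDr ler_wpDr // mulr_ge0 // ltW.
have : P * ln (s * P) <= - (`|K| + 1).
  have -> : - (`|K| + 1) = P * (- ((`|K| + 1) / P)) by field; rewrite gt_eqF.
  apply: ler_wpM2l; first exact: ltW.
  by rewrite -[X in _ <= X]expRK ler_ln ?posrE.
have := ler_norm K.
rewrite xlogxE //.
have -> : s * K + s * P * ln (s * P) = s * (K + P * ln (s * P)) by ring.
rewrite pmulr_rlt0 //; lra.
Qed.

Lemma slope_ge0 L Q : 0 <= Q ->
  (forall s, 0 < s <= 1 -> 0 <= s * L + s ^+ 2 * Q) -> 0 <= L.
Proof.
move=> Q_ge0 quad; rewrite leNgt; apply/negP => L_lt0.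
set s := - L / (Q - L).
have QL_gt0 : 0 < Q - L by lra.
have s_gt0 : 0 < s by apply: divr_gt0; lra.
have s_le1 : s <= 1 by rewrite ler_pdivrMr //; lra.
have := quad s; rewrite s_gt0 s_le1 => /(_ isT).
have -> : s * L + s ^+ 2 * Q = s * (L + s * Q) by ring.
rewrite pmulr_rge0 //.
have : s * (Q - L) = - L by rewrite /s; field; rewrite gt_eqF.
nra.
Qed.

Lemma telescope_rate (a K : nat -> R) :
  (forall k, a k.+1 <= a k) -> (forall k, a k.+1 <= K k - K k.+1) ->
  forall t, t%:R * a t <= K 0%N - K t.
Proof.
move=> a_decr a_step; elim => [|k IH]; first by rewrite mul0r subrr.
have := a_decr k; have := a_step k.
have : k%:R * a k.+1 <= k%:R * a k by rewrite ler_wpM2l // ler0n.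
rewrite -natr1 mulrDl mul1r; lra.
Qed.

Lemma xlogxy_uniform_le x Y c : 0 <= x -> x <= Y -> 0 < Y -> 1 <= c ->
  xlogxy x (Y / c) <= x * ln c.
Proof.
rewrite le_eqVlt => /orP[/eqP <-|x_gt0] x_leY Y_gt0 c_ge1.
  by rewrite xlogxy0 mul0r.
have c_gt0 : 0 < c by lra.
rewrite xlogxyE // (_ : x / (Y / c) = x / Y * c); last by field; rewrite !gt_eqF.
rewrite ln_mulr ?divr_gt0 //.
have : ln (x / Y) <= 0 by apply: ln_le0; rewrite ler_pdivrMr // mul1r.
nra.
Qed.

End ScalarFacts.

Section Polytope.
Variables (R : realType) (n m : nat).
Implicit Types (v b w : 'M[R]_(n, m)) (d e B : 'I_n -> R).

Definition KLB b d w e : R :=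
  \sum_(i < n) \sum_(j < m) xlogxy (b i j) (w i j) + \sum_(i < n) xlogxy (d i) (e i).

Definition lin v bt b : R :=
  \sum_(i < n) \sum_(j < m) grad_phi v bt i j * (b i j - bt i j).

Definition phi_lin v b b' : R :=
  \sum_(i < n) \sum_(j < m) (- (1 + ln (v i j)) * (b' i j - b i j)).

Definition interior b d : Prop := (forall i j, 0 < b i j) /\ (forall i, 0 < d i).

Lemma md_objE v bt dt b d : md_obj v bt dt b d = lin v bt b + KLB b d bt dt.
Proof. by rewrite /md_obj /lin /KLB addrA. Qed.

Lemma lin_self v b : lin v b b = 0.
Proof. by rewrite /lin big1 // => i _; rewrite big1 // => j _; rewrite subrr mulr0. Qed.

(* On \mathcal{B} the row sums agree, so KLB is a sum of kl terms. *)
Lemma KLB_kl B b d w e : inB B b d -> inB B w e ->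
  KLB b d w e = \sum_(i < n) (\sum_(j < m) kl (b i j) (w i j) + kl (d i) (e i)).
Proof.
move=> [_ _ b_row] [_ _ w_row]; rewrite /KLB -big_split /=; apply: eq_bigr => i _.
rewrite /kl big_split /= big_split /= sumrN.
by have := b_row i; have := w_row i; lra.
Qed.

Lemma KLB_ge_sum B b d w e : inB B b d -> inB B w e -> interior w e ->
  \sum_(i < n) \sum_(j < m) kl (b i j) (w i j) <= KLB b d w e.
Proof.
move=> hb hw [w_gt0 e_gt0]; rewrite (KLB_kl hb hw); apply: ler_sum => i _.
by case: hb => _ d_ge0 _; rewrite lerDl; exact: kl_ge0.
Qed.

Lemma KLB_ge0 B b d w e : inB B b d -> inB B w e -> interior w e -> 0 <= KLB b d w e.
Proof.
move=> hb hw hwe; apply: le_trans (KLB_ge_sum hb hw hwe).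
case: hb hwe => b_ge0 _ _ [w_gt0 _].
by apply: sumr_ge0 => i _; apply: sumr_ge0 => j _; exact: kl_ge0.
Qed.

Lemma KLB_self b d : KLB b d b d = 0.
Proof.
rewrite /KLB !big1 ?addr0 // => i _; rewrite ?xlogxy_self //.
by rewrite big1 // => j _; rewrite xlogxy_self.
Qed.

Lemma KLB_eq0 B b d w e : inB B b d -> inB B w e -> interior w e ->
  KLB b d w e = 0 -> b = w /\ d = e.
Proof.
move=> hb hw [w_gt0 e_gt0]; rewrite (KLB_kl hb hw) => KLB0.
have [b_ge0 d_ge0 _] := hb.
have row_ge0 i : 0 <= \sum_(j < m) kl (b i j) (w i j).
  by apply: sumr_ge0 => j _; exact: kl_ge0.
have row0 i : \sum_(j < m) kl (b i j) (w i j) = 0 /\ kl (d i) (e i) = 0.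
  have : \sum_(j < m) kl (b i j) (w i j) + kl (d i) (e i) = 0.
    by apply: (psumr_eq0P _ KLB0) => // k _; rewrite addr_ge0 ?kl_ge0.
  by move/eqP; rewrite paddr_eq0 ?kl_ge0 // => /andP[/eqP ? /eqP ?].
split; last by apply: funext => i; apply: kl_eq0 => //; case: (row0 i).
apply/matrixP => i j; apply: kl_eq0 => //.
by case: (row0 i) => row_i _; apply: (psumr_eq0P _ row_i) => // k _; exact: kl_ge0.
Qed.

Lemma price_ge0 b : (forall i j, 0 <= b i j) -> forall j, 0 <= price b j.
Proof. by move=> b_ge0 j; apply: sumr_ge0. Qed.

Lemma price_gt0 b : (0 < n)%N -> (forall i j, 0 < b i j) -> forall j, 0 < price b j.
Proof.
case: n b => // n' b _ b_gt0 j; rewrite /price big_ord_recl.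
by apply: ltr_pwDl => //; apply: sumr_ge0 => i _; exact: ltW.
Qed.

Lemma phi_diff v b b' : phi v b' - phi v b =
  phi_lin v b b' + \sum_(j < m) (xlogx (price b' j) - xlogx (price b j)).
Proof.
rewrite /phi /phi_lin sumrB.
have -> : \sum_(i < n) \sum_(j < m) (- (1 + ln (v i j)) * (b' i j - b i j)) =
  \sum_(i < n) \sum_(j < m) ((1 + ln (v i j)) * b i j)
  - \sum_(i < n) \sum_(j < m) ((1 + ln (v i j)) * b' i j).
  rewrite -sumrB; apply: eq_bigr => i _; rewrite -sumrB; apply: eq_bigr => j _.
  ring.
lra.
Qed.

Lemma phi_bregman v b b' : (forall i j, 0 < v i j) -> (forall j, 0 < price b j) ->
  (forall j, 0 <= price b' j) ->
  phi v b' - phi v b - lin v b b' = \sum_(j < m) kl (price b' j) (price b j).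
Proof.
move=> v_gt0 p_gt0 p'_ge0.
have lin_diff : phi_lin v b b' - lin v b b' =
    \sum_(j < m) (- (ln (price b j) + 1) * (price b' j - price b j)).
  rewrite /phi_lin /lin -sumrB; under eq_bigr do rewrite -sumrB.
  rewrite exchange_big /=; apply: eq_bigr => j _.
  have -> : price b' j - price b j = \sum_(i < n) (b' i j - b i j) by rewrite sumrB.
  rewrite mulr_sumr; apply: eq_bigr => i _.
  by rewrite mxE ln_divr ?p_gt0 ?v_gt0 //; ring.
rewrite phi_diff addrAC lin_diff -big_split /=; apply: eq_bigr => j _.
by rewrite -xlogx_bregman //; ring.
Qed.

(* By the log-sum inequality, aggregating into prices contracts kl. *)
Lemma price_kl_le b b' : (0 < n)%N -> (forall i j, 0 < b i j) ->
  (forall i j, 0 <= b' i j) ->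
  \sum_(j < m) kl (price b' j) (price b j) <=
  \sum_(i < n) \sum_(j < m) kl (b' i j) (b i j).
Proof.
move=> n_gt0 b_gt0 b'_ge0; rewrite exchange_big /=; apply: ler_sum => j _.
rewrite /kl /price big_split /= sumrB.
have := @logsum _ _ (fun i => b' i j) (fun i => b i j) (fun i => b'_ge0 i j)
  (fun i => b_gt0 i j) (price_gt0 n_gt0 b_gt0 j).
move=> /= logsum_j; lra.
Qed.

Lemma phi_rel_smooth v b b' : (0 < n)%N -> (forall i j, 0 < v i j) ->
  (forall i j, 0 < b i j) -> (forall i j, 0 <= b' i j) ->
  phi v b' <= phi v b + lin v b b' + \sum_(i < n) \sum_(j < m) kl (b' i j) (b i j).
Proof.
move=> n_gt0 v_gt0 b_gt0 b'_ge0.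
have := phi_bregman v_gt0 (price_gt0 n_gt0 b_gt0) (price_ge0 b'_ge0).
have := price_kl_le n_gt0 b_gt0 b'_ge0; lra.
Qed.

Definition cmb (s : R) b b' : 'M[R]_(n, m) :=
  \matrix_(i, j) ((1 - s) * b i j + s * b' i j).

Lemma price_cmb s b b' j :
  price (cmb s b b') j = price b j + s * (price b' j - price b j).
Proof.
rewrite /price /cmb; under eq_bigr do rewrite mxE.
rewrite big_split /= -!mulr_sumr; ring.
Qed.

Lemma inB_cmb B b d b' d' s : inB B b d -> inB B b' d' -> 0 <= s <= 1 ->
  inB B (cmb s b b') (fun i => (1 - s) * d i + s * d' i).
Proof.
move=> [b_ge0 d_ge0 b_row] [b'_ge0 d'_ge0 b'_row] /andP[s_ge0 s_le1]; split.
- by move=> i j; rewrite mxE; have := b_ge0 i j; have := b'_ge0 i j; nra.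
- by move=> i; have := d_ge0 i; have := d'_ge0 i; nra.
- move=> i; rewrite /cmb; under eq_bigr do rewrite mxE.
  by rewrite big_split /= -!mulr_sumr; have := b_row i; have := b'_row i; nra.
Qed.

Lemma sum_cmb (F : 'I_n -> 'I_m -> R) s b b' :
  \sum_(i < n) \sum_(j < m) F i j * (cmb s b b' i j - b i j) =
  s * \sum_(i < n) \sum_(j < m) F i j * (b' i j - b i j).
Proof.
rewrite mulr_sumr; apply: eq_bigr => i _; rewrite mulr_sumr; apply: eq_bigr => j _.
by rewrite mxE; ring.
Qed.

Lemma phi_lin_cmb v s b b' : phi_lin v b (cmb s b b') = s * phi_lin v b b'.
Proof. exact: sum_cmb. Qed.

Lemma lin_cmb v s b b' : lin v b (cmb s b b') = s * lin v b b'.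
Proof. exact: sum_cmb. Qed.

Lemma KLB_uniform_le B b d : (forall i, 0 < B i) -> inB B b d ->
  KLB b d (\matrix_(i, j) (B i / (m.+1)%:R)) (fun i => B i / (m.+1)%:R)
  <= (\sum_(i < n) B i) * ln (m.+1)%:R.
Proof.
move=> B_gt0 [b_ge0 d_ge0 b_row].
have m1_ge1 : 1 <= (m.+1)%:R :> R by rewrite ler1n.
have b_le i j : b i j <= B i.
  rewrite -(b_row i) (bigD1 j) //= -addrA lerDl.
  by apply: addr_ge0 => //; apply: sumr_ge0.
have d_le i : d i <= B i by rewrite -(b_row i) lerDr; exact: sumr_ge0.
apply: le_trans (_ : \sum_(i < n) \sum_(j < m) (b i j * ln (m.+1)%:R)
   + \sum_(i < n) (d i * ln (m.+1)%:R) <= _).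
  apply: lerD; apply: ler_sum => i _.
    by apply: ler_sum => j _; rewrite mxE; apply: xlogxy_uniform_le.
  exact: xlogxy_uniform_le.
rewrite -big_split mulr_suml; apply: ler_sum => i _ /=.
by rewrite -mulr_suml -mulrDl b_row.
Qed.

End Polytope.

Lemma price_no_buyers (R : realType) (m : nat) (b : 'M[R]_(0, m)) j : price b j = 0.
Proof. by rewrite /price big_ord0. Qed.

Lemma phi_no_buyers (R : realType) (m : nat) (v b : 'M[R]_(0, m)) : phi v b = 0.
Proof.
rewrite /phi big_ord0 oppr0 add0r big1 // => j _.
by rewrite price_no_buyers xlogx0.
Qed.

Lemma KLdiv_no_buyers (R : realType) (m : nat) (b b' : 'M[R]_(0, m)) :
  KLdiv (price b) (price b') = 0.
Proof.
by rewrite /KLdiv !big1 ?subrr ?addr0 //; move=> j _;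
  rewrite !price_no_buyers ?xlogxy0.
Qed.

Section MirrorUpdate.
Variables (R : realType) (n m : nat) (v b : 'M[R]_(n, m)) (d B : 'I_n -> R).
Hypothesis B_gt0 : forall i, 0 < B i.
Hypothesis bd_int : interior b d.

(* The closed form of the mirror step: multiplicative weights normalized
   row by row to the budgets. *)
Definition md_weight i j : R := b i j * expR (- grad_phi v b i j).
Definition md_norm i : R := \sum_(j < m) md_weight i j + d i.
Definition md_b : 'M[R]_(n, m) := \matrix_(i, j) (B i * md_weight i j / md_norm i).
Definition md_d i : R := B i * d i / md_norm i.

Lemma md_weight_gt0 i j : 0 < md_weight i j.
Proof. by apply: mulr_gt0; [case: bd_int | apply: expR_gt0]. Qed.

Lemma md_norm_gt0 i : 0 < md_norm i.
Proof.
apply: ltr_wpDl; last by case: bd_int.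
by apply: sumr_ge0 => j _; apply: ltW; apply: md_weight_gt0.
Qed.

Lemma md_update_interior : interior md_b md_d.
Proof.
have [b_gt0 d_gt0] := bd_int.
split => [i j|i]; rewrite ?mxE; (apply: divr_gt0; last exact: md_norm_gt0).
  by apply: mulr_gt0; [exact: B_gt0 | exact: md_weight_gt0].
by apply: mulr_gt0; [exact: B_gt0 | exact: d_gt0].
Qed.

Lemma md_update_feasible : inB B md_b md_d.
Proof.
have [b_gt0 d_gt0] := md_update_interior; split => [i j|i|i]; try exact: ltW.
rewrite /md_b /md_d; under eq_bigr do rewrite mxE.
rewrite -mulr_suml -mulr_sumr.
have -> : \sum_(j < m) md_weight i j = md_norm i - d i by rewrite /md_norm; ring.
by field; rewrite gt_eqF ?md_norm_gt0.
Qed.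

Lemma xlogxy_md_b i j x : 0 <= x ->
  xlogxy x (b i j) = xlogxy x (md_b i j) + x * (ln (B i / md_norm i) - grad_phi v b i j).
Proof.
have [b_gt0 _] := bd_int; have [bh_gt0 _] := md_update_interior.
move=> x_ge0; rewrite (xlogxy_shift x_ge0 (b_gt0 i j) (bh_gt0 i j)).
have -> : md_b i j / b i j = B i / md_norm i * expR (- grad_phi v b i j).
  by rewrite mxE /md_weight; field; rewrite !gt_eqF ?md_norm_gt0.
by rewrite ln_mulr ?expRK ?expR_gt0 ?divr_gt0 ?md_norm_gt0.
Qed.

Lemma xlogxy_md_d i x : 0 <= x ->
  xlogxy x (d i) = xlogxy x (md_d i) + x * ln (B i / md_norm i).
Proof.
have [_ d_gt0] := bd_int; have [_ dh_gt0] := md_update_interior.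
move=> x_ge0; rewrite (xlogxy_shift x_ge0 (d_gt0 i) (dh_gt0 i)).
by congr (_ + _ * ln _); rewrite /md_d; field; rewrite !gt_eqF ?md_norm_gt0.
Qed.

Lemma md_obj_decomp : exists C, forall b' d', inB B b' d' ->
  md_obj v b d b' d' = C + KLB b' d' md_b md_d.
Proof.
exists (\sum_(i < n) (\sum_(j < m) (- grad_phi v b i j * b i j)
                     + B i * ln (B i / md_norm i))).
move=> b' d' [b'_ge0 d'_ge0 b'_row].
rewrite md_objE /KLB /lin.
under [X in _ + (X + _)]eq_bigr do under eq_bigr do rewrite xlogxy_md_b //.
under [X in _ + (_ + X)]eq_bigr do rewrite xlogxy_md_d //.
rewrite -!big_split /=; apply: eq_bigr => i _.
set L := ln (B i / md_norm i).
have lin_row : \sum_(j < m) grad_phi v b i j * (b' i j - b i j)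
    + \sum_(j < m) b' i j * (L - grad_phi v b i j) =
    \sum_(j < m) (- grad_phi v b i j * b i j) + (\sum_(j < m) b' i j) * L.
  by rewrite mulr_suml -!big_split; apply: eq_bigr => j _ /=; ring.
rewrite big_split /= -(b'_row i) mulrDl; lra.
Qed.

End MirrorUpdate.

(* The argmin of the mirror step is the closed-form update: it is interior
   and the three-point identity holds on \mathcal{B}. *)
Lemma md_step (R : realType) (n m : nat) (v b : 'M[R]_(n, m)) (d B : 'I_n -> R)
  (bn : 'M[R]_(n, m)) (dn : 'I_n -> R) :
  (forall i, 0 < B i) -> interior b d -> inB B bn dn ->
  (forall b' d', inB B b' d' -> md_obj v b d bn dn <= md_obj v b d b' d') ->
  interior bn dn /\ (forall b' d', inB B b' d' ->
     md_obj v b d b' d' = md_obj v b d bn dn + KLB b' d' bn dn).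
Proof.
move=> B_gt0 bd_int bn_feas bn_min.
have [C decomp] := md_obj_decomp v B_gt0 bd_int.
have upd_feas := md_update_feasible v B_gt0 bd_int.
have upd_int := md_update_interior v B_gt0 bd_int.
have : KLB bn dn (md_b v b d B) (md_d v b d B) = 0.
  have := bn_min _ _ upd_feas; rewrite !decomp // KLB_self addr0.
  by have := KLB_ge0 bn_feas upd_feas upd_int; lra.
move=> /(KLB_eq0 bn_feas upd_feas upd_int) [-> ->]; split => // b' d' hb'.
by rewrite !decomp // KLB_self addr0.
Qed.

Section Optimality.
Variables (R : realType) (n m : nat) (v : 'M[R]_(n, m)) (B : 'I_n -> R).
Variables (bs : 'M[R]_(n, m)) (ds : 'I_n -> R).
Hypothesis v_gt0 : forall i j, 0 < v i j.
Hypothesis bs_feas : inB B bs ds.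
Hypothesis bs_opt : forall b' d', inB B b' d' -> phi v bs <= phi v b'.

Lemma mass_on_good (j0 : 'I_m) : (0 < n)%N -> (forall i, 0 < B i) ->
  exists b' d', [/\ inB B b' d', 0 < price b' j0 &
                   forall j, j != j0 -> price b' j <= price bs j].
Proof.
move=> n_gt0 B_gt0; have [bs_ge0 ds_ge0 bs_row] := bs_feas.
set i0 := Ordinal n_gt0.
set b' : 'M[R]_(n, m) := \matrix_(i, j)
  (if i == i0 then (if j == j0 then B i else 0) else bs i j).
have b'_ge0 i j : 0 <= b' i j.
  by rewrite mxE; case: (i == i0); case: (j == j0); rewrite ?bs_ge0 // ltW.
exists b', (fun i => if i == i0 then 0 else ds i); split.
- split => [i j|i|i]; first exact: b'_ge0.
    by case: (i == i0).
  under eq_bigr do rewrite mxE.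
  case: (i == i0); last exact: bs_row.
  by rewrite -big_mkcond big_pred1_eq addr0.
- rewrite /price (bigD1 i0) //= mxE !eqxx.
  by apply: ltr_pwDl => //; apply: sumr_ge0 => i _.
- move=> j j_neq; apply: ler_sum => i _; rewrite mxE.
  by case: (i == i0); rewrite ?(negbTE j_neq) ?bs_ge0.
Qed.

(* Along the segment from bstar towards such a point, phi grows at most like
   s K + xlogx (s P): every good but j0 contributes linearly in s, while j0,
   of price zero at bstar, contributes the xlogx term. *)
Lemma phi_cmb_le b' d' j0 s : inB B b' d' -> price bs j0 = 0 ->
  (forall j, j != j0 -> price b' j <= price bs j) -> 0 < s <= 1 ->
  phi v (cmb s bs b') - phi v bs <=
  s * (phi_lin v bs b' + \sum_(j < m) step_coef (price bs j) (price b' j - price bs j))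
  + xlogx (s * price b' j0).
Proof.
move=> b'_feas p0 b'_le /andP[s_gt0 s_le1].
have s_range : 0 <= s <= 1 by rewrite ltW.
have [bs_ge0 _ _] := bs_feas; have [b'_ge0 _ _] := b'_feas.
have [cmb_ge0 _ _] := inB_cmb bs_feas b'_feas s_range.
have others : \sum_(j < m | j != j0) (xlogx (price (cmb s bs b') j) - xlogx (price bs j))
    <= \sum_(j < m | j != j0) s * step_coef (price bs j) (price b' j - price bs j).
  apply: ler_sum => j j_neq; rewrite price_cmb; apply: xlogx_step_le => //.
  - exact: price_ge0.
  - by rewrite -price_cmb; exact: price_ge0.
  - move=> pj0; have := b'_le j j_neq; have := price_ge0 b'_ge0 j.
    by rewrite pj0; lra.
rewrite phi_diff phi_lin_cmb mulrDr [s * \sum_(j < m) _]mulr_sumr (bigD1 j0) //=.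
rewrite [X in _ <= _ + X + _](bigD1 j0) //= price_cmb p0 step_coef0 xlogx0.
rewrite !subr0 !add0r; lra.
Qed.

Lemma opt_price_gt0 : (0 < n)%N -> (forall i, 0 < B i) -> forall j, 0 < price bs j.
Proof.
move=> n_gt0 B_gt0 j0; have [bs_ge0 _ _] := bs_feas.
rewrite lt_def price_ge0 // andbT; apply/eqP => p0.
have [b' [d' [b'_feas P_gt0 b'_le]]] := mass_on_good j0 n_gt0 B_gt0.
set K := phi_lin v bs b' +
  \sum_(j < m) step_coef (price bs j) (price b' j - price bs j).
have [s [s_range decrease]] := xlogx_beats_linear K P_gt0.
have s_range' : 0 <= s <= 1 by case/andP: s_range => s_gt0 ->; rewrite ltW.
have := bs_opt (inB_cmb bs_feas b'_feas s_range').
have := phi_cmb_le b'_feas p0 b'_le s_range; rewrite /K in decrease; lra.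
Qed.

Lemma opt_first_order : (forall j, 0 < price bs j) ->
  forall b' d', inB B b' d' -> 0 <= lin v bs b'.
Proof.
move=> p_gt0 b' d' b'_feas.
set Q := \sum_(j < m) (price b' j - price bs j) ^+ 2 / price bs j.
apply: (@slope_ge0 _ _ Q).
  by apply: sumr_ge0 => j _; apply: divr_ge0; rewrite ?sqr_ge0 // ltW.
move=> s /andP[s_gt0 s_le1].
have s_range : 0 <= s <= 1 by rewrite ltW.
have cmb_feas := inB_cmb bs_feas b'_feas s_range.
have [cmb_ge0 _ _] := cmb_feas.
have : \sum_(j < m) kl (price (cmb s bs b') j) (price bs j) <= s ^+ 2 * Q.
  rewrite /Q mulr_sumr; apply: ler_sum => j _.
  apply: le_trans (kl_le_chi2 (price_ge0 cmb_ge0 j) (p_gt0 j)) _.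
  by rewrite price_cmb addrAC subrr add0r exprMn mulrA.
have := phi_bregman v_gt0 p_gt0 (price_ge0 cmb_ge0).
have := bs_opt cmb_feas.
rewrite lin_cmb; lra.
Qed.

Lemma KLdiv_le_gap b d : (forall j, 0 < price bs j) -> inB B b d ->
  KLdiv (price b) (price bs) <= phi v b - phi v bs.
Proof.
move=> p_gt0 bd_feas; have [b_ge0 _ _] := bd_feas.
have := phi_bregman v_gt0 p_gt0 (price_ge0 b_ge0).
have := opt_first_order p_gt0 bd_feas.
have -> : KLdiv (price b) (price bs) = \sum_(j < m) kl (price b j) (price bs j).
  by rewrite /KLdiv /kl big_split /= sumrB.
lra.
Qed.

End Optimality.

Section MirrorDescent.
Variables (R : realType) (n m : nat) (v : 'M[R]_(n, m)) (B : 'I_n -> R).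
Variables (bs : 'M[R]_(n, m)) (ds : 'I_n -> R).
Variables (b : nat -> 'M[R]_(n, m)) (d : nat -> 'I_n -> R).
Hypothesis B_gt0 : forall i, 0 < B i.
Hypothesis b0E : forall i j, b 0%N i j = B i / (m.+1)%:R.
Hypothesis d0E : forall i, d 0%N i = B i / (m.+1)%:R.
Hypothesis md_iter : forall t : nat, inB B (b t.+1) (d t.+1) /\
  (forall b' d', inB B b' d' ->
     md_obj v (b t) (d t) (b t.+1) (d t.+1) <= md_obj v (b t) (d t) b' d').

Lemma md_init : interior (b 0%N) (d 0%N) /\ inB B (b 0%N) (d 0%N).
Proof.
have m1_gt0 : 0 < (m.+1)%:R :> R by rewrite ltr0n.
have u_gt0 i : 0 < B i / (m.+1)%:R by rewrite divr_gt0.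
split; first by split => [i j|i]; rewrite ?b0E ?d0E u_gt0.
split => [i j|i|i]; rewrite ?b0E ?d0E ?(ltW (u_gt0 i)) //.
under eq_bigr do rewrite b0E.
rewrite sumr_const card_ord -mulr_natr -natr1; field.
by rewrite natr1 gt_eqF.
Qed.

Lemma md_invariant t : interior (b t) (d t) /\ inB B (b t) (d t).
Proof.
elim: t => [|t [bd_int _]]; first exact: md_init.
have [feas minim] := md_iter t.
by have [next_int _] := md_step B_gt0 bd_int feas minim.
Qed.

Lemma md_three_point t b' d' : inB B b' d' ->
  md_obj v (b t) (d t) b' d' =
  md_obj v (b t) (d t) (b t.+1) (d t.+1) + KLB b' d' (b t.+1) (d t.+1).
Proof.
have [bd_int _] := md_invariant t; have [feas minim] := md_iter t.
by have [_ three] := md_step B_gt0 bd_int feas minim; exact: three.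
Qed.

Hypothesis n_gt0 : (0 < n)%N.
Hypothesis v_gt0 : forall i j, 0 < v i j.

(* By relative smoothness, a step lowers phi at least by minus the optimal
   value of the subproblem. *)
Lemma md_one_step k :
  phi v (b k.+1) <= phi v (b k) + md_obj v (b k) (d k) (b k.+1) (d k.+1).
Proof.
have [[b_gt0 d_gt0] feas] := md_invariant k; have [_ feas1] := md_invariant k.+1.
have [b1_ge0 _ _] := feas1.
have := phi_rel_smooth n_gt0 v_gt0 b_gt0 b1_ge0.
have := KLB_ge_sum feas1 feas (conj b_gt0 d_gt0).
rewrite md_objE; lra.
Qed.

(* phi is nonincreasing along the iterates (compare with the point b_k itself). *)
Lemma md_monotone k : phi v (b k.+1) <= phi v (b k).
Proof.
have [bd_int feas] := md_invariant k; have [bd1_int feas1] := md_invariant k.+1.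
have := md_three_point k feas; rewrite md_objE lin_self KLB_self add0r.
have := KLB_ge0 feas feas1 bd1_int; have := md_one_step k; lra.
Qed.

Hypothesis bs_feas : inB B bs ds.

Lemma md_descent k : phi v (b k.+1) - phi v bs <=
  KLB bs ds (b k) (d k) - KLB bs ds (b k.+1) (d k.+1).
Proof.
have [[b_gt0 _] _] := md_invariant k; have [bs_ge0 _ _] := bs_feas.
have := md_three_point k bs_feas; rewrite md_objE.
have := phi_bregman v_gt0 (price_gt0 n_gt0 b_gt0) (price_ge0 bs_ge0).
have : 0 <= \sum_(j < m) kl (price bs j) (price (b k) j).
  by apply: sumr_ge0 => j _; apply: kl_ge0; [exact: price_ge0 | exact: price_gt0].
have := md_one_step k; lra.
Qed.

Lemma md_rate t :
  t%:R * (phi v (b t) - phi v bs) <= (\sum_(i < n) B i) * ln (m.+1)%:R.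
Proof.
have dist_ge0 k : 0 <= KLB bs ds (b k) (d k).
  by have [bd_int feas] := md_invariant k; exact: KLB_ge0 bs_feas feas bd_int.
have dist0 : KLB bs ds (b 0%N) (d 0%N) <= (\sum_(i < n) B i) * ln (m.+1)%:R.
  have -> : b 0%N = \matrix_(i, j) (B i / (m.+1)%:R).
    by apply/matrixP => i j; rewrite mxE b0E.
  have -> : d 0%N = (fun i => B i / (m.+1)%:R) by apply: funext => i; rewrite d0E.
  exact: KLB_uniform_le.
have gap_decr k : phi v (b k.+1) - phi v bs <= phi v (b k) - phi v bs.
  by rewrite lerD2r md_monotone.
have := telescope_rate gap_decr md_descent t.
have := dist_ge0 t; lra.
Qed.

End MirrorDescent.

Unset Implicit Arguments.
Theorem theorem7 (R : realType) (n m : nat) (v : 'M[R]_(n, m)) (B : 'I_n -> R)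
  (bstar : 'M[R]_(n, m)) (dstar : 'I_n -> R)
  (b : nat -> 'M[R]_(n, m)) (d : nat -> 'I_n -> R) :
  (forall i j, 0 < v i j) ->
  (forall i, 0 < B i) ->
  (* (bstar, dstar) is an optimal solution of the QL-Shmyrev program *)
  inB B bstar dstar ->
  (forall b' d', inB B b' d' -> phi v bstar <= phi v b') ->
  (* initialization *)
  (forall i j, b 0%N i j = B i / (m.+1)%:R) ->
  (forall i, d 0%N i = B i / (m.+1)%:R) ->
  (* mirror descent: (b t.+1, d t.+1) is the argmin over \mathcal{B} *)
  (forall t : nat, inB B (b t.+1) (d t.+1) /\
     (forall b' d', inB B b' d' ->
        md_obj v (b t) (d t) (b t.+1) (d t.+1) <= md_obj v (b t) (d t) b' d')) ->
  forall t : nat, (1 <= t)%N ->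
    KLdiv (price (b t)) (price bstar) <= phi v (b t) - phi v bstar /\
    phi v (b t) - phi v bstar <= (\sum_(i < n) B i) * ln ((m.+1)%:R) / t%:R.
Proof.
move=> v_gt0 B_gt0 bs_feas bs_opt b0E d0E md_iter t t_ge1.
have [n0|n_gt0] := posnP n.
  by subst n; rewrite !phi_no_buyers KLdiv_no_buyers subrr big_ord0 !mul0r.
have [_ bt_feas] := md_invariant B_gt0 b0E d0E md_iter t.
have p_gt0 := opt_price_gt0 bs_feas bs_opt n_gt0 B_gt0.
split; first by have := KLdiv_le_gap v_gt0 bs_feas bs_opt p_gt0 bt_feas.
rewrite ler_pdivlMr ?ltr0n // mulrC.
by have := md_rate B_gt0 b0E d0E md_iter n_gt0 v_gt0 bs_feas t.
Qed.
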